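(* Let $q\in\mathbb{C}[x_0,\dots,x_3]_2$ be a quadratic form of rank four. There are no nonsingular (i.e. reduced, consisting of ten distinct points) subschemes of $\mathbb{P}^3$ of length ten apolar to $q^2$.
   Context: $T=\mathbb{C}[y_0,\dots,y_3]$ acts on $S=\mathbb{C}[x_0,\dots,x_3]$ by differentiation; $\mathbb{P}^3=\mathbb{P}(S_1)$ has coordinate ring $T$, and a subscheme $\Gamma$ is apolar to $f$ if every element of its ideal $I_\Gamma\subset T$ annihilates $f$. *)

From HB Require Import structures.
From mathcomp Require Import all_boot all_order all_algebra.
From mathcomp Require Import reals.
From mathcomp Require Import complex.
From mathcomp Require Import mpoly.
Set Implicit Arguments. Unset Strict Implicit. Unset Printing Implicit Defensive.
Import Order.TTheory GRing.Theory Num.Theory.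
Local Open Scope ring_scope.

Notation CC R := (complex (Num.RealClosedField.sort (R : realType))).

(* Both S = C[x_0..x_3] and T = C[y_0..y_3] are polynomial rings in 4 vars. *)
Notation poly4 R := {mpoly (CC R)[4]}.

(* Apolarity action of T on S: y^m acts as the differential operator d^m. *)
Definition contract (R : realType) (g f : poly4 R) : poly4 R :=
  \sum_(m <- msupp g) g@_m *: mderivm m f.

Definition qmatrix (R : realType) (q : poly4 R) : 'M[CC R]_4 :=
  \matrix_(i < 4, j < 4) (mderiv i (mderiv j q))@_0%MM.

(* Homogeneous ideal I_Gamma in T of the finite set of points
   Gamma = {[a_0], ..., [a_(k-1)]} of P^3 = P(S_1): the polynomials vanishing
   on the affine cone over Gamma. *)
Definition ideal_of_points (R : realType) (k : nat) (a : 'I_k -> 'I_4 -> CC R)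
  (g : poly4 R) : Prop :=
  forall (i : 'I_k) (t : CC R), meval (fun l => t * a i l) g = 0.

Definition distinct_points (R : realType) (k : nat) (a : 'I_k -> 'I_4 -> CC R) : Prop :=
  (forall i, exists l, a i l != 0) /\
  (forall i j, i != j -> ~ exists c : CC R, forall l, a i l = c * a j l).

Definition apolar (R : realType) (k : nat) (a : 'I_k -> 'I_4 -> CC R) (f : poly4 R) : Prop :=
  forall g, ideal_of_points a g -> contract g f = 0.

From HB Require Import structures.
From mathcomp Require Import all_boot all_order all_algebra.
From mathcomp Require Import reals complex mpoly.
From mathcomp Require Import bigenough ssrcomplements ring zify.
Set Implicit Arguments. Unset Strict Implicit. Unset Printing Implicit Defensive.
Import Order.TTheory GRing.Theory Num.Theory BigEnough.
Local Open Scope ring_scope.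

(* Let Q be the Hessian matrix of q and P = Q^-1.  Contracting the quartic
   l_u l_v B (with l_u, l_v linear forms and B a quadratic form) against q^2
   gives the constant 2 u X(B) v^T, where X(B) = tr(BQ) Q + Q (B + B^T) Q.
   Suppose ten points a_k are apolar to q^2.  Taking B zero at every a_k shows
   that the points impose independent conditions on quadrics, so there are
   quadrics B_k with B_k(a_l) = delta_kl.  Taking B = B_k and u orthogonal to
   a_k gives 5 tr(B_k Q) P(a_k, a_k) = 2 and
   P(a_k, a_k) P(a_l, a_l) = 6 P(a_k, a_l)^2 for l <> k.  Expanding the
   quadric (a_0 P)(a_1 P) in the basis B_k and pairing with Q gives
   P(a_0, a_1) = sum_k P(a_0, a_k) P(a_1, a_k) tr(B_k Q).  These relations
   force 2 z^2 = 3 for an integer z. *)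

Section HomogDeriv.
Variables (R : nzRingType) (n : nat).
Implicit Types p : {mpoly R[n]}.

Lemma mderiv_dhomog d p i : p \is d.+1.-homog -> mderiv i p \is d.-homog.
Proof.
move=> hp; apply/dhomogP => m; rewrite mcoeff_msupp mcoeff_deriv => nz.
have: (m + U_(i))%MM \in msupp p.
  by rewrite mcoeff_msupp; apply: contraNneq nz => ->; rewrite mul0rn.
by move/(dhomog_mf hp); rewrite /= mdegD mdeg1 addn1 => -[].
Qed.

Lemma dhomog0_mpolyC p : p \is 0.-homog -> p = (p@_0)%:MP.
Proof.
move=> hp; apply/mpolyP => m; rewrite mcoeffC.
have [->|nz] := eqVneq m 0%MM; first by rewrite mulr1.
by rewrite mulr0 (dhomog_nemf_coeff hp) // mdeg_eq0.
Qed.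

End HomogDeriv.

Section Contraction.
Variable R : realType.
Implicit Types g f : poly4 R.

Lemma contractE g f i : (msize g <= i)%N ->
  contract g f = \sum_(m : 'X_{1..4 < i}) g@_m *: mderivm m f.
Proof.
move=> le_gi; rewrite /contract (big_mksub 'X_{1..4 < i}) ?msupp_uniq //=.
  by rewrite big_rmcond //= => m /memN_msupp_eq0 ->; rewrite scale0r.
by move=> m /msize_mdeg_lt /leq_trans; apply.
Qed.

Lemma contract0 f : contract 0 f = 0.
Proof. by rewrite /contract msupp0 big_nil. Qed.

Lemma contractD g1 g2 f : contract (g1 + g2) f = contract g1 f + contract g2 f.
Proof.
pose_big_enough i.
  rewrite !(@contractE _ _ i) // -big_split.
  by apply/eq_bigr => m _; rewrite mcoeffD scalerDl.
by close.
Qed.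

Lemma contractZ c g f : contract (c *: g) f = c *: contract g f.
Proof.
pose_big_enough i.
  rewrite !(@contractE _ _ i) // scaler_sumr.
  by apply/eq_bigr => m _; rewrite mcoeffZ scalerA.
by close.
Qed.

Lemma contract_sum (I : Type) (r : seq I) (P : pred I) (G : I -> poly4 R) f :
  contract (\sum_(i <- r | P i) G i) f = \sum_(i <- r | P i) contract (G i) f.
Proof. by elim/big_rec2: _ => [|i x y _ <-]; rewrite ?contract0 ?contractD. Qed.

Lemma contractX m f : contract 'X_[m] f = mderivm m f.
Proof. by rewrite /contract msuppX big_seq1 mcoeffX eqxx scale1r. Qed.

Lemma contractX4 (a b c d : 'I_4) f :
  contract ('X_a * 'X_b * 'X_c * 'X_d) f = mderiv d (mderiv c (mderiv b (mderiv a f))).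
Proof. by rewrite -!mpolyXD contractX !mderivmDm !mderivmU1m. Qed.

End Contraction.

Section RowForms.
Variables (F : comNzRingType) (n : nat).
Implicit Types (x y u v w : 'rV[F]_n) (A B Q : 'M[F]_n).

Definition dot x y : F := (x *m y^T) 0 0.

Definition quad_at B x : F := dot (x *m B) x.

Definition contraction_mx Q B : 'M[F]_n := \tr (B *m Q) *: Q + Q *m (B + B^T) *m Q.

Lemma dotE x y : dot x y = \sum_l x 0 l * y 0 l.
Proof. by rewrite /dot mxE; apply: eq_bigr => l _; rewrite mxE. Qed.

Lemma dotC x y : dot x y = dot y x.
Proof. by rewrite !dotE; apply: eq_bigr => l _; rewrite mulrC. Qed.

Lemma dotDl x1 x2 y : dot (x1 + x2) y = dot x1 y + dot x2 y.
Proof. by rewrite /dot mulmxDl mxE. Qed.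

Lemma dotZl s x y : dot (s *: x) y = s * dot x y.
Proof. by rewrite /dot -scalemxAl !mxE. Qed.

Lemma dotNl x y : dot (- x) y = - dot x y.
Proof. by rewrite -scaleN1r dotZl mulN1r. Qed.

Lemma dotMnl x y k : dot (x *+ k) y = dot x y *+ k.
Proof. by rewrite -scaler_nat dotZl mulr_natl. Qed.

Lemma dotBl x1 x2 y : dot (x1 - x2) y = dot x1 y - dot x2 y.
Proof. by rewrite dotDl dotNl. Qed.

Lemma dotZr s x y : dot x (s *: y) = s * dot x y.
Proof. by rewrite dotC dotZl dotC. Qed.

Lemma dot_delta x l : dot x (delta_mx 0 l) = x 0 l.
Proof. by rewrite /dot trmx_delta -colE mxE. Qed.

Lemma dotl_eq0 w : (forall v, dot w v = 0) -> w = 0.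
Proof. by move=> w0; apply/rowP => l; rewrite mxE -dot_delta w0. Qed.

Lemma bform_eq0 A : (forall u v, dot (u *m A) v = 0) -> A = 0.
Proof.
move=> A0; apply/row_matrixP => i; rewrite rowE linear0.
by apply: dotl_eq0; apply: A0.
Qed.

Lemma bformC A x y : A^T = A -> dot (x *m A) y = dot (y *m A) x.
Proof.
by move=> As; rewrite /dot -[y *m A *m x^T]trmxK [RHS]mxE !trmx_mul trmxK As mulmxA.
Qed.

Lemma bformE A u v : dot (u *m A) v = \sum_c \sum_d u 0 c * A c d * v 0 d.
Proof.
rewrite dotE exchange_big; apply: eq_bigr => d _.
by rewrite mxE big_distrl.
Qed.

Lemma bform_rank1 x y z w : dot (x *m (y^T *m z)) w = dot x y * dot z w.
Proof. by rewrite /dot mulmxA -mulmxA mxE big_ord1. Qed.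

Lemma mxtrace_rank1 x y : \tr (x^T *m y) = dot y x.
Proof. by rewrite mxtrace_mulC /mxtrace big_ord1. Qed.

Lemma quad_atD A B x : quad_at (A + B) x = quad_at A x + quad_at B x.
Proof. by rewrite /quad_at mulmxDr dotDl. Qed.

Lemma quad_atB A B x : quad_at (A - B) x = quad_at A x - quad_at B x.
Proof. by rewrite /quad_at mulmxBr dotBl. Qed.

Lemma quad_at_lincomb (I : Type) (r : seq I) (P : pred I) (s : I -> F) (A : I -> 'M_n) x :
  quad_at (\sum_(i <- r | P i) s i *: A i) x = \sum_(i <- r | P i) s i * quad_at (A i) x.
Proof.
elim/big_rec2: _ => [|i y B _ <-]; first by rewrite /quad_at mulmx0 /dot mul0mx mxE.
by rewrite quad_atD /quad_at -scalemxAr dotZl.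
Qed.

Lemma contraction_mxE Q B c d : contraction_mx Q B c d =
  \sum_a \sum_b B a b * (Q c d * Q b a + Q c a * Q b d + Q c b * Q a d).
Proof.
rewrite mxE [X in X + _]mxE mxE; under eq_bigr do rewrite mxE.
have -> : \sum_i (\sum_j Q c j * (B + B^T) j i) * Q i d =
    \sum_a \sum_b Q c a * B a b * Q b d + \sum_a \sum_b Q c b * B a b * Q a d.
  rewrite [in RHS]exchange_big -big_split /=; apply: eq_bigr => i _.
  rewrite big_distrl -big_split /=; apply: eq_bigr => j _.
  by rewrite !mxE; ring.
have -> : \tr (B *m Q) = \sum_a \sum_b B a b * Q b a.
  by apply: eq_bigr => a _; rewrite mxE.
rewrite big_distrl -!big_split /=; apply: eq_bigr => a _.
by rewrite big_distrl -!big_split /=; apply: eq_bigr => b _; ring.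
Qed.

End RowForms.

Section LinQuadForms.
Variables (R : comNzRingType) (n : nat).
Implicit Types (u v : 'rV[R]_n) (B : 'M[R]_n) (x : 'I_n -> R).

Definition linform u : {mpoly R[n]} := \sum_j u 0 j *: 'X_j.

Definition quadform B : {mpoly R[n]} := \sum_a \sum_b B a b *: ('X_a * 'X_b).

Lemma linform_linform_quadform u v B : linform u * linform v * quadform B =
  \sum_c \sum_d \sum_a \sum_b (u 0 c * v 0 d * B a b) *: ('X_c * 'X_d * 'X_a * 'X_b).
Proof.
rewrite /quadform /linform !mulr_suml; apply: eq_bigr => c _.
rewrite -mulrA big_distrl /= mulr_sumr; apply: eq_bigr => d _.
rewrite !mulr_sumr; apply: eq_bigr => a _.
rewrite !mulr_sumr; apply: eq_bigr => b _.
by rewrite -!mul_mpolyC !mpolyCM; ring.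
Qed.

Lemma meval_linform x u : meval x (linform u) = dot u (\row_l x l).
Proof.
rewrite dotE (big_morph _ (mevalD x) (meval0 x)); apply: eq_bigr => j _.
by rewrite mevalZ mevalXU mxE.
Qed.

Lemma meval_quadform x B : meval x (quadform B) = quad_at B (\row_l x l).
Proof.
rewrite /quad_at bformE (big_morph _ (mevalD x) (meval0 x)); apply: eq_bigr => a _.
rewrite (big_morph _ (mevalD x) (meval0 x)); apply: eq_bigr => b _.
by rewrite mevalZ mevalM !mevalXU !mxE mulrA [_ * x a]mulrC.
Qed.

End LinQuadForms.

Section Hessian.
Variables (R : realType) (q : poly4 R).
Local Notation Q := (qmatrix q).

Lemma qmatrix_sym i j : Q i j = Q j i.
Proof. by rewrite !mxE mderiv_comm. Qed.

Hypothesis q_quadratic : q \is 2.-homog.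

Lemma mderiv2_qform i j : mderiv i (mderiv j q) = (Q i j)%:MP.
Proof. by rewrite mxE; apply/dhomog0_mpolyC/mderiv_dhomog/mderiv_dhomog. Qed.

Lemma mderiv4_qform_sqr c d a b :
  mderiv b (mderiv a (mderiv d (mderiv c (q ^+ 2)))) =
  (2 * (Q c d * Q b a + Q c a * Q b d + Q c b * Q a d))%:MP.
Proof.
rewrite expr2 !(mderivD, mderivM, mderiv2_qform, mderivC).
rewrite !(mul0r, mulr0, add0r, addr0) !(mpolyCD, mpolyCM) ?mpolyC_nat.
rewrite (qmatrix_sym d c) (qmatrix_sym a c) (qmatrix_sym b c); ring.
Qed.

Lemma contract_linform_quadform_sqr u v B :
  contract (linform u * linform v * quadform B) (q ^+ 2) =
  (2 * dot (u *m contraction_mx Q B) v)%:MP.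
Proof.
rewrite linform_linform_quadform bformE mulr_sumr raddf_sum contract_sum.
apply: eq_bigr => c _; rewrite mulr_sumr raddf_sum contract_sum.
apply: eq_bigr => d _; rewrite contraction_mxE big_distrr big_distrl /= mulr_sumr.
rewrite raddf_sum contract_sum; apply: eq_bigr => a _.
rewrite big_distrr big_distrl /= mulr_sumr raddf_sum contract_sum; apply: eq_bigr => b _.
rewrite contractZ contractX4 mderiv4_qform_sqr -mul_mpolyC -mpolyCM.
by congr (_%:MP); ring.
Qed.

End Hessian.

Definition sym_index (j k : 'I_4) : 'I_10 :=
  inord (nth 0 (nth [::] [:: [:: 0; 4; 5; 6]; [:: 4; 1; 7; 8];
                             [:: 5; 7; 2; 9]; [:: 6; 8; 9; 3]] j) k)%N.

Lemma sym_indexC j k : sym_index j k = sym_index k j.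
Proof. by case: j k => [[|[|[|[|j]]]] hj] [[|[|[|[|k]]]] hk]. Qed.

Lemma sym_index_surj (p : 'I_10) : exists j k, sym_index j k = p.
Proof.
pose pair_of (p : nat) : nat * nat := nth (0, 0) [:: (0, 0); (1, 1); (2, 2); (3, 3);
  (0, 1); (0, 2); (0, 3); (1, 2); (1, 3); (2, 3)]%N p.
exists (inord (pair_of p).1), (inord (pair_of p).2).
case: p => [[|[|[|[|[|[|[|[|[|[|p]]]]]]]]]] hp] //.
all: by apply: val_inj; rewrite /sym_index /= !inordK.
Qed.

Section DualQuadrics.
Variables (F : fieldType) (pts : 'I_10 -> 'rV[F]_4).
Hypothesis pts_indep :
  forall B, B^T = B -> (forall k, quad_at B (pts k) = 0) -> B = 0.

Definition sym_unit (p : 'I_10) : 'M[F]_4 := \matrix_(j, k) (sym_index j k == p)%:R.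

Lemma sym_lincomb_sym (s : 'I_10 -> F) :
  (\sum_p s p *: sym_unit p)^T = \sum_p s p *: sym_unit p.
Proof.
apply/matrixP => j k; rewrite mxE !summxE; apply: eq_bigr => p _.
by rewrite !mxE sym_indexC.
Qed.

Lemma sym_lincombE (s : 'I_10 -> F) j k :
  (\sum_p s p *: sym_unit p) j k = s (sym_index j k).
Proof.
rewrite summxE (bigD1 (sym_index j k)) //= big1 => [|p /negbTE np].
  by rewrite !mxE eqxx mulr1 addr0.
by rewrite !mxE eq_sym np mulr0.
Qed.

Definition eval_mx : 'M[F]_10 := \matrix_(p, k) quad_at (sym_unit p) (pts k).

Lemma eval_mx_unit : eval_mx \in unitmx.
Proof.
rewrite -row_free_unit; apply/inj_row_free => s s0.
have : \sum_p s 0 p *: sym_unit p = 0.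
  apply: pts_indep => [|k]; first exact: sym_lincomb_sym.
  rewrite quad_at_lincomb; have := congr1 (fun w : 'rV_10 => w 0 k) s0.
  by rewrite /= !mxE => e; rewrite -[in RHS]e; apply: eq_bigr => p _; rewrite mxE.
move=> B0; apply/rowP => p; have [j [k <-]] := sym_index_surj p.
by rewrite -sym_lincombE B0 !mxE.
Qed.

Definition dual_quadric (i : 'I_10) : 'M[F]_4 :=
  \sum_p ((delta_mx 0 i : 'rV_10) *m invmx eval_mx) 0 p *: sym_unit p.

Lemma dual_quadric_sym i : (dual_quadric i)^T = dual_quadric i.
Proof. exact: sym_lincomb_sym. Qed.

Lemma quad_at_dual_quadric i k : quad_at (dual_quadric i) (pts k) = (k == i)%:R.
Proof.
have := congr1 (fun w : 'rV_10 => w 0 k) (mulmxKV eval_mx_unit (delta_mx 0 i)).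
rewrite /= [RHS]mxE eqxx eq_sym /= => <-.
by rewrite quad_at_lincomb mxE; apply: eq_bigr => p _; rewrite [eval_mx _ _]mxE.
Qed.

Lemma sym_dual_expansion B :
  B^T = B -> B = \sum_k quad_at B (pts k) *: dual_quadric k.
Proof.
move=> Bs; apply/eqP; rewrite -subr_eq0; apply/eqP/pts_indep => [|l].
  rewrite linearB /= Bs raddf_sum /=; congr (_ - _); apply: eq_bigr => k _.
  by rewrite linearZ /= dual_quadric_sym.
rewrite quad_atB quad_at_lincomb (bigD1 l) //= big1 => [|k /negbTE lk].
  by rewrite quad_at_dual_quadric eqxx mulr1 addr0 subrr.
by rewrite quad_at_dual_quadric eq_sym lk mulr0.
Qed.

End DualQuadrics.

Lemma sum_signed_int (R : pzRingType) (I : Type) (r : seq I) (P : pred I) (f : I -> R) s :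
  (forall i, P i -> f i = s \/ f i = - s) ->
  exists z : int, \sum_(i <- r | P i) f i = s * z%:~R.
Proof.
move=> fs; elim/big_rec: _ => [|i x Pi [z ->]]; first by exists 0; rewrite mulr0.
have [->|->] := fs i Pi; [exists (1 + z) | exists (- 1 + z)];
  by rewrite rmorphD ?rmorphN rmorph1 mulrDr ?mulrN mulr1.
Qed.

Lemma gram_contradiction (F : numFieldType) (I : finType) (M : I -> I -> F) (c : I -> F)
    (i0 i1 i2 : I) :
  i0 != i1 -> i2 != i0 -> i2 != i1 ->
  (forall k l, M k l = M l k) ->
  (forall k, 5 * c k * M k k = 2) ->
  (forall k l, l != k -> M k k * M l l = 6 * M k l ^+ 2) ->
  M i0 i1 = \sum_k M i0 k * M i1 k * c k -> False.
Proof.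
move=> i01 i20 i21 Msym diag offdiag expand.
have Mkk_neq0 k : M k k != 0.
  by apply: contra_eq_neq (diag k) => ->; rewrite mulr0 eq_sym pnatr_eq0.
pose r k := M i0 k * M i1 k * c k.
have {}expand : M i0 i1 = \sum_k r k := expand.
pose P k := (k != i0) && (k != i1).
have r_rest : 5 * \sum_(k | P k) r k = M i0 i1.
  have r0 : 5 * r i0 = 2 * M i0 i1 by rewrite /r -(diag i0) (Msym i1 i0); ring.
  have r1 : 5 * r i1 = 2 * M i0 i1 by rewrite /r -(diag i1); ring.
  move: expand; rewrite (bigD1 i0) // (bigD1 i1) 1?eq_sym //= => e.
  have -> : 5 * \sum_(k | P k) r k = 5 * M i0 i1 - 5 * r i0 - 5 * r i1.
    by rewrite [in RHS]e; ring.
  by rewrite r0 r1; ring.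
have r_sqr k : P k -> 225 * r k ^+ 2 = M i0 i0 * M i1 i1.
  case/andP => k0 k1; apply: (mulIf (x := 4)); first by rewrite pnatr_eq0.
  have -> : 225 * r k ^+ 2 * 4 = (6 * M i0 k ^+ 2) * (6 * M i1 k ^+ 2) * (5 * c k) ^+ 2.
    by rewrite /r; ring.
  have -> : (4 : F) = 2 * 2 by rewrite -natrM.
  by rewrite -(offdiag _ _ k0) -(offdiag _ _ k1) -(diag k); ring.
pose s := r i2.
have P_i2 : P i2 by rewrite /P i20 i21.
have [z sum_z] : exists z : int, \sum_(k | P k) r k = s * z%:~R.
  apply: sum_signed_int => k Pk.
  have nz225 : (225 : F) != 0 by rewrite pnatr_eq0.
  have : (r k == s) || (r k == - s) by rewrite -eqf_sqr -(inj_eq (mulfI nz225)) !r_sqr.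
  by case/orP => /eqP; [left | right].
have s_neq0 : s != 0.
  apply: contraTneq (mulf_neq0 (Mkk_neq0 i0) (Mkk_neq0 i1)) => s0.
  by rewrite -(r_sqr i2 P_i2) -/s s0 expr0n mulr0 eqxx.
have M01E : M i0 i1 = 5 * s * z%:~R by rewrite -r_rest sum_z mulrA.
have : (2 * (z * z) - 3)%:~R = 0 :> F.
  apply: (mulfI (x := 75 * s ^+ 2)); first by rewrite mulf_neq0 ?expf_neq0 ?pnatr_eq0.
  rewrite mulr0 -(subrr (M i0 i0 * M i1 i1)) {1}(offdiag i0 i1 _); last by rewrite eq_sym.
  rewrite -(r_sqr i2 P_i2) -/s M01E intrB !intrM; ring.
by move/eqP; rewrite intr_eq0 => /eqP; lia.
Qed.

Lemma eq_of_sub_eq (V : zmodType) (a b c d : V) : a = b -> c - d = a - b -> c = d.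
Proof. by move=> ab e; apply/subr0_eq; rewrite e ab subrr. Qed.

Lemma exists_dot_eq1 (F : fieldType) n (x : 'rV[F]_n) : x != 0 -> exists e, dot e x = 1.
Proof.
move=> x_neq0; have [l xl] : exists l, x 0 l != 0.
  apply/existsP; apply: contraR x_neq0 => /existsPn x0.
  by apply/eqP/rowP => l; rewrite mxE; apply/eqP/negPn/x0.
by exists ((x 0 l)^-1 *: delta_mx 0 l); rewrite dotZl dotC dot_delta mulVf.
Qed.

(* By contract_linform_quadform_sqr, [dot (u *m contraction_mx Q B) v] is half
   the contraction of l_u l_v B against q^2; the premise says that l_u l_v B
   vanishes at every point. *)
Definition apolar_forms (F : comNzRingType) n m (Q : 'M[F]_n) (pts : 'I_m -> 'rV[F]_n) :=
  forall B u v, (forall k, quad_at B (pts k) = 0 \/ dot u (pts k) = 0) ->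
  dot (u *m contraction_mx Q B) v = 0.

Section ApolarPoints.
Variables (F : numFieldType) (Q : 'M[F]_4) (pts : 'I_10 -> 'rV[F]_4).
Hypotheses (Q_sym : Q^T = Q) (Q_unit : Q \in unitmx) (pts_apolar : apolar_forms Q pts).
Local Notation P := (invmx Q).
Local Notation gram x y := (dot (x *m invmx Q) y).

Lemma invmx_sym : P^T = P.
Proof. by rewrite trmx_inv Q_sym. Qed.

Lemma mxtrace_trmx_mulQ B : \tr (B^T *m Q) = \tr (B *m Q).
Proof. by rewrite -mxtrace_tr trmx_mul trmxK Q_sym mxtrace_mulC. Qed.

Lemma mulmxQK m (A : 'M_(m, 4)) : A *m Q *m P = A.
Proof. by rewrite -mulmxA mulmxV // mulmx1. Qed.

Lemma mulmxPK m (A : 'M_(m, 4)) : A *m P *m Q = A.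
Proof. by rewrite -mulmxA mulVmx // mulmx1. Qed.

Lemma contraction_mx_invmx B :
  P *m contraction_mx Q B *m P = \tr (B *m Q) *: P + (B + B^T).
Proof.
rewrite mulmxDr mulmxDl -scalemxAr -scalemxAl mulVmx // mul1mx.
by rewrite !mulmxA mulVmx // mul1mx -mulmxA mulmxV // mulmx1.
Qed.

Lemma vanishing_quadric_skew B :
  (forall k, quad_at B (pts k) = 0) -> B + B^T = 0.
Proof.
move=> B0; set c := \tr (B *m Q).
have X0 : contraction_mx Q B = 0 by apply: bform_eq0 => u v; apply: pts_apolar => k; left.
have BBt : B + B^T = - (c *: P).
  by apply/eqP; rewrite -addr_eq0 addrC -contraction_mx_invmx X0 mulmx0 mul0mx.
have : \tr ((B + B^T) *m Q) = - (c *+ 4).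
  by rewrite BBt mulNmx -scalemxAl mulVmx // raddfN /= mxtraceZ mxtrace1 mulr_natr.
rewrite mulmxDl mxtraceD mxtrace_trmx_mulQ -/c => /eqP.
rewrite -subr_eq0 opprK -mulr2n -mulrnDr mulrn_eq0 /= => /eqP c0.
by rewrite BBt c0 scale0r oppr0.
Qed.

Lemma apolar_pts_indep B : B^T = B -> (forall k, quad_at B (pts k) = 0) -> B = 0.
Proof.
move=> Bs /vanishing_quadric_skew/eqP.
by rewrite Bs -mulr2n -scaler_nat scaler_eq0 pnatr_eq0 => /eqP.
Qed.

(* Stating these through [Bd] pins the instances of [F] to the numFieldType
   ones, so that [ring] sees the same atoms everywhere. *)
Let Bd i : 'M[F]_4 := dual_quadric pts i.

Let Bd_sym i : (Bd i)^T = Bd i := dual_quadric_sym pts i.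

Let quad_at_Bd i k : quad_at (Bd i) (pts k) = (k == i)%:R :=
  quad_at_dual_quadric apolar_pts_indep i k.

Let Bd_expansion B : B^T = B -> B = \sum_k quad_at B (pts k) *: Bd k :=
  sym_dual_expansion apolar_pts_indep (B := B).

Section DualPoint.
Variables (i : 'I_10) (e : 'rV[F]_4).
Hypothesis e_pt : dot e (pts i) = 1.
Local Notation a := (pts i).
Local Notation B := (Bd i).
Local Notation c := (\tr (Bd i *m Q)).
Let g := (e *m Q *m B) *+ 2 + c *: e.

Lemma dual_quadric_perp u : dot u a = 0 -> (u *m Q *m B) *+ 2 = - (c *: u).
Proof.
move=> ua; have uX : u *m contraction_mx Q B = 0.
  apply: dotl_eq0 => v; apply: pts_apolar => k.
  by rewrite quad_at_Bd; have [->|_] := eqVneq k i; [right | left].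
have := congr1 (mulmx^~ P) uX; rewrite mul0mx /contraction_mx Bd_sym.
rewrite mulmxDr mulmxDl -scalemxAr -scalemxAl mulmxQK !mulmxA mulmxQK mulmxDr.
by rewrite -mulr2n => /eqP; rewrite addrC addr_eq0 => /eqP.
Qed.

Lemma dual_quadric_mulQ x : (x *m Q *m B) *+ 2 = - (c *: x) + dot x a *: g.
Proof.
have := dual_quadric_perp (u := x - dot x a *: e).
rewrite dotBl dotZl e_pt mulr1 subrr => /(_ erefl).
rewrite !mulmxBl -!scalemxAl /g; move: (x *m Q *m B) (e *m Q *m B) => X E h.
apply/rowP => l; have := congr1 (fun w : 'rV_4 => w 0 l) h; rewrite !mxE => hl.
by apply: (eq_of_sub_eq hl); ring.
Qed.

Lemma dual_quadric_bform x y :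
  dot (x *m B) y *+ 2 = - (c * gram x y) + gram x a * dot g y.
Proof.
have := congr1 (fun w => dot w y) (dual_quadric_mulQ (x *m P)).
by rewrite /= mulmxPK dotMnl dotDl dotNl !dotZl.
Qed.

Lemma dual_quadric_trace : dot g a = 6 * c.
Proof.
(* Pair dual_quadric_mulQ with the standard basis and sum: 2 c = - 4 c + g.a *)
have two_c : c *+ 2 = \sum_l (- c + a 0 l * g 0 l).
  rewrite {1}mxtrace_mulC -sumrMnl; apply: eq_bigr => l _.
  have -> : (Q *m B) l l = dot (delta_mx 0 l *m Q *m B) (delta_mx 0 l).
    by rewrite dot_delta -mulmxA -rowE [RHS]mxE.
  rewrite -dotMnl dual_quadric_mulQ dotDl dotNl !dotZl !dot_delta mxE !eqxx mulr1.
  by rewrite dotC dot_delta.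
rewrite big_split /= sumr_const card_ord -dotE dotC in two_c.
by apply: (eq_of_sub_eq (esym two_c)); ring.
Qed.

Lemma dual_quadric_diag : 5 * c * gram a a = 2.
Proof.
have := dual_quadric_bform a a.
rewrite [dot _ _](quad_at_Bd i i) eqxx /= dual_quadric_trace => h.
by apply: (eq_of_sub_eq (esym h)); ring.
Qed.

Lemma dual_quadric_offdiag j : j != i ->
  gram a a * gram (pts j) (pts j) = 6 * gram a (pts j) ^+ 2.
Proof.
move=> ji; set b := pts j.
have c_neq0 : c != 0.
  by apply: contra_eq_neq dual_quadric_diag => ->; rewrite mulr0 mul0r eq_sym pnatr_eq0.
have gram_ba : gram b a = gram a b by rewrite bformC ?invmx_sym.
have B_ba : dot (b *m B) a = dot (a *m B) b by rewrite bformC ?Bd_sym.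
have h1 : gram a a * dot g b = 6 * c * gram a b.
  have := dual_quadric_bform b a; rewrite B_ba dual_quadric_trace gram_ba.
  by rewrite dual_quadric_bform => h; apply: (eq_of_sub_eq h); ring.
have h2 : c * gram b b = gram a b * dot g b.
  have := dual_quadric_bform b b; rewrite [dot _ _](quad_at_Bd i j) (negbTE ji) gram_ba.
  by rewrite /= mul0rn => /esym/eqP; rewrite addrC subr_eq0 => /eqP ->.
apply: (mulfI c_neq0); transitivity (gram a b * (gram a a * dot g b)).
  by rewrite mulrCA h2; ring.
by rewrite h1; ring.
Qed.
End DualPoint.

Hypothesis pts_neq0 : forall k, pts k != 0.

Lemma gram_diag k : 5 * \tr (Bd k *m Q) * gram (pts k) (pts k) = 2.
Proof. by have [e /dual_quadric_diag] := exists_dot_eq1 (pts_neq0 k). Qed.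

Lemma gram_offdiag k l : l != k ->
  gram (pts k) (pts k) * gram (pts l) (pts l) = 6 * gram (pts k) (pts l) ^+ 2.
Proof.
by move=> lk; have [e e_pt] := exists_dot_eq1 (pts_neq0 k); apply: dual_quadric_offdiag e_pt l lk.
Qed.

Lemma gram_sym k l : gram (pts k) (pts l) = gram (pts l) (pts k).
Proof. by rewrite bformC ?invmx_sym. Qed.

Lemma gram_expand k0 k1 : gram (pts k0) (pts k1) =
  \sum_k gram (pts k0) (pts k) * gram (pts k1) (pts k) * \tr (Bd k *m Q).
Proof.
set y := pts k0 *m P; set z := pts k1 *m P; set B := y^T *m z + z^T *m y.
have Bsym : B^T = B by rewrite /B linearD /= !trmx_mul !trmxK addrC.
have := congr1 (fun A => \tr (A *m Q)) (Bd_expansion Bsym).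
rewrite /= mulmx_suml raddf_sum /= {1}/B mulmxDl mxtraceD -!mulmxA mulVmx // !mulmx1.
rewrite !mxtrace_rank1 !(dotC (pts _)) (gram_sym k1 k0) -mulr2n => e.
apply/eqP; rewrite -(eqr_pMn2r (n := 2)) // e -sumrMnl; apply/eqP/eq_bigr => k _.
by rewrite -scalemxAl mxtraceZ /B quad_atD /quad_at !bform_rank1 !(dotC (pts _)); ring.
Qed.

Lemma no_apolar_ten_points : False.
Proof.
apply: (@gram_contradiction _ _ (fun k l => gram (pts k) (pts l))
  (fun k => \tr (Bd k *m Q)) 0 1 2) => //.
- exact: gram_sym.
- exact: gram_diag.
- exact: gram_offdiag.
- exact: gram_expand.
Qed.

End ApolarPoints.

Lemma ideal_of_points_linform_quadform (R : realType) k (a : 'I_k -> 'I_4 -> CC R) u v B :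
  (forall i, quad_at B (\row_l a i l) = 0 \/ dot u (\row_l a i l) = 0) ->
  ideal_of_points a (linform u * linform v * quadform B).
Proof.
move=> hk i t; rewrite !mevalM meval_linform meval_quadform.
have -> : \row_l (t * a i l) = t *: \row_l a i l by apply/rowP => l; rewrite !mxE.
have -> : quad_at B (t *: \row_l a i l) = t ^+ 2 * quad_at B (\row_l a i l).
  by rewrite /quad_at -scalemxAl dotZl dotZr mulrA.
by rewrite dotZr; case: (hk i) => ->; rewrite !(mulr0, mul0r).
Qed.

Lemma apolar_forms_of_apolar (R : realType) (q : poly4 R) (a : 'I_10 -> 'I_4 -> CC R) :
  q \is 2.-homog -> apolar a (q ^+ 2) -> apolar_forms (qmatrix q) (fun k => \row_l a k l).
Proof.
move=> hq hap B u v /(ideal_of_points_linform_quadform v)/hap.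
rewrite contract_linform_quadform_sqr // => /eqP.
by rewrite mpolyC_eq0 mulf_eq0 pnatr_eq0 => /eqP.
Qed.

Theorem lemma4p15 (R : realType) (q : poly4 R) :
  q \is 2.-homog -> \rank (qmatrix q) = 4%N ->
  ~ exists a : 'I_10 -> 'I_4 -> CC R, distinct_points a /\ apolar a (q ^+ 2).
Proof.
move=> hq rk [a [[a_neq0 _] hap]].
have Q_sym : (qmatrix q)^T = qmatrix q by apply/matrixP => i j; rewrite mxE qmatrix_sym.
have Q_unit : qmatrix q \in unitmx by rewrite -row_free_unit /row_free rk.
apply: (no_apolar_ten_points Q_sym Q_unit (apolar_forms_of_apolar hq hap)) => k.
have [l al] := a_neq0 k.
by apply: contraNneq al => /rowP/(_ l); rewrite !mxE => ->.
Qed.
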